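(* Fix an input $x$ with $n=n(x)\ge2$ tokens and a mask $m\in\{0,1\}^{|\mathrm H|}$ with pruning ratio $\rho$, i.e. $\sum_{h=1}^{|\mathrm H|}(1-m_h)=|\mathrm H|\rho$. For each head $h$ and query token $t\in\{1,\dots,n\}$ let $\boldsymbol\alpha^{(h)}_t,\boldsymbol\alpha'^{(h)}_t\in\Delta^{n-1}$ be the attention distributions of the models trained on two neighboring datasets $\mathcal S,\mathcal S'$, and let $V_h\in\mathbb R^{n\times d_v}$ be a common value matrix with $\max_h\|V_h\|_{\infty\to2}\le M$. Set $\Delta_h(t)=(\boldsymbol\alpha^{(h)}_t-\boldsymbol\alpha'^{(h)}_t)^\top V_h$ and $$\|\Delta(x)\|_2:=\frac1n\sum_{t=1}^n\sum_{h=1}^{|\mathrm H|}(1-m_h)\|\Delta_h(t)\|_2.$$ Then $$\|\Delta(x)\|_2\;\le\;M\sqrt{8\log n}\sum_{h=1}^{|\mathrm H|}(1-m_h)\sqrt{\overline{\mathrm{AD}}_h(x)}\;\le\;\sqrt8\,M\sqrt{|\mathrm H|\rho\log n}\;\sqrt{\sum_{h=1}^{|\mathrm H|}(1-m_h)\,\overline{\mathrm{AD}}_h(x)}.$$ Moreover, if all inputs have the same length $n$, then for any distribution over $x$, $$\mathbb E\bigl[\|\Delta(x)\|_2\bigr]\le\sqrt8\,M\sqrt{|\mathrm H|\rho\log n}\;\sqrt{\sum_{h=1}^{|\mathrm H|}(1-m_h)\,\mathbb E\bigl[\overline{\mathrm{AD}}_h(x)\bigr]}.$$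
   Context: $\Delta^{n-1}$ is the probability simplex; $H(\mathbf p)=-\sum_jp_j\log p_j$. $\|V\|_{\infty\to2}:=\max_j\|V(j,:)\|_2$ (maximum row Euclidean norm). Neighboring datasets differ in exactly one example. Token-averaged, length-normalized attention deficits: $\mathrm{AD}_h(x)=\frac{1}{n\log n}\sum_{t=1}^n\bigl(\log n-H(\boldsymbol\alpha^{(h)}_t)\bigr)\in[0,1]$, $\mathrm{AD}'_h(x)$ defined likewise with $\boldsymbol\alpha'^{(h)}_t$, and $\overline{\mathrm{AD}}_h(x)=\tfrac12(\mathrm{AD}_h(x)+\mathrm{AD}'_h(x))$. Equivalently $\mathrm{AD}_h=1-\mathrm{AE}_h$ with $\mathrm{AE}_h(x)=\frac{1}{n\log n}\sum_tH(\boldsymbol\alpha^{(h)}_t)$. *)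

From HB Require Import structures.
From mathcomp Require Import all_boot all_order all_algebra.
From mathcomp Require Import all_classical all_reals all_analysis.
Set Implicit Arguments. Unset Strict Implicit. Unset Printing Implicit Defensive.
Import Order.TTheory GRing.Theory Num.Theory.
Local Open Scope ring_scope.

Section Defs.
Context {R : realType}.

Definition is_dist (n : nat) (p : 'I_n -> R) : Prop :=
  (forall j, 0 <= p j) /\ \sum_j p j = 1.

(* Shannon entropy H(p) = - sum_j p_j log p_j (natural log; ln 0 = 0 in
   mathcomp-analysis, so 0 log 0 = 0) *)
Definition entropy (n : nat) (p : 'I_n -> R) : R := - \sum_j p j * ln (p j).

Definition l2norm (k : nat) (v : 'rV[R]_k) : R := Num.sqrt (\sum_i v 0 i ^+ 2).

Definition inf2norm (n d : nat) (V : 'M[R]_(n, d)) : R :=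
  \big[Num.max/0]_(j < n) l2norm (row j V).

(* token-averaged, length-normalised attention deficit;
   alpha t = attention distribution of query token t *)
Definition AD (n : nat) (alpha : 'I_n -> 'I_n -> R) : R :=
  (n%:R * ln n%:R)^-1 * \sum_(t < n) (ln n%:R - entropy (alpha t)).

Definition ADbar (n : nat) (alpha alpha' : 'I_n -> 'I_n -> R) : R :=
  (AD alpha + AD alpha') / 2.

Definition Delta_ht (n d : nat) (alpha alpha' : 'I_n -> 'I_n -> R)
  (V : 'M[R]_(n, d)) (t : 'I_n) : 'rV[R]_d :=
  (\row_j (alpha t j - alpha' t j)) *m V.

(* pruned-head indicator 1 - m_h, with m_h = true meaning the head is kept *)
Definition pruned (H : nat) (m : 'I_H -> bool) (h : 'I_H) : R := 1 - (m h : nat)%:R.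

Definition DeltaNorm (H n d : nat) (m : 'I_H -> bool)
  (alpha alpha' : 'I_H -> 'I_n -> 'I_n -> R) (V : 'I_H -> 'M[R]_(n, d)) : R :=
  n%:R^-1 * \sum_(t < n) \sum_(h < H) pruned m h * l2norm (Delta_ht (alpha h) (alpha' h) (V h) t).

End Defs.

From HB Require Import structures.
From mathcomp Require Import all_boot all_order all_algebra.
From mathcomp Require Import all_classical all_reals all_analysis.
From mathcomp Require Import ring lra measurable_realfun.
Import Order.TTheory GRing.Theory Num.Theory.
Local Open Scope ring_scope.
Local Open Scope classical_set_scope.

Set Implicit Arguments. Unset Strict Implicit. Unset Printing Implicit Defensive.

(* Writing u for the uniform distribution on n tokens, each pruned head
   contributes ||Delta_h(t)|| <= M ||alpha_t - alpha'_t||_1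
   <= M (||alpha_t - u||_1 + ||alpha'_t - u||_1), and Pinsker's inequality
   bounds ||p - u||_1 by sqrt (2 KL(p || u)) = sqrt (2 (log n - H(p))); this is
   where the attention deficit enters.  Every square root is handled through
   sqrt (a b) = inf_(l > 0) (a / l + b l) / 2: the bounds are proved in this
   linear form, which can be summed over tokens and heads and integrated, and
   the infimum is taken only at the end.  This single device yields Pinsker
   (from 3 (x - 1)^2 <= 2 (x + 2) (x ln x - x + 1)), the averaging over tokens,
   Cauchy-Schwarz over the pruned heads and Jensen's inequality for the
   expectation. *)

Section AMGM.
Context {R : rcfType}.

Lemma mulr2_le_amgm (u v l : R) : 0 < l -> 2 * (u * v) <= u ^+ 2 / l + l * v ^+ 2.
Proof.
move=> l0; rewrite -subr_ge0.
have -> : u ^+ 2 / l + l * v ^+ 2 - 2 * (u * v) = (u - l * v) ^+ 2 / l by field; lra.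
by rewrite divr_ge0 ?sqr_ge0 ?ltW.
Qed.

Lemma le_sqrtrM_amgm (X a b : R) : 0 <= a -> 0 <= b ->
  (forall l, 0 < l -> X <= (a / l + b * l) / 2) -> X <= Num.sqrt (a * b).
Proof.
move=> a0 b0 HX; have [X0|Xp] := lerP X 0; first exact: le_trans X0 (sqrtr_ge0 _).
have [b_eq0|bn0] := eqVneq b 0.
  subst b.
  have := HX ((a + 1) / X) (ltac:(by rewrite divr_gt0 //; lra)).
  have -> : (a / ((a + 1) / X) + 0 * ((a + 1) / X)) / 2 = X * (a / (2 * (a + 1))).
    by field; lra.
  have : a / (2 * (a + 1)) < 1 by rewrite ltr_pdivrMr; lra.
  nra.
have bp : 0 < b by rewrite lt_neqAle eq_sym bn0.
have := HX (X / b) (divr_gt0 Xp bp).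
have -> : (a / (X / b) + b * (X / b)) / 2 = (a * b / X + X) / 2 by field; lra.
have XXV : X * X^-1 = 1 by rewrite mulfV ?gt_eqF.
move=> Xle; have Xsq : X ^+ 2 <= a * b by nra.
by rewrite -(ger0_norm (ltW Xp)) -sqrtr_sqr ler_sqrt ?mulr_ge0.
Qed.

Lemma cauchy_schwarz_sum (I : Type) (r : seq I) (u v : I -> R) :
  \sum_(i <- r) u i * v i <=
  Num.sqrt (\sum_(i <- r) u i ^+ 2) * Num.sqrt (\sum_(i <- r) v i ^+ 2).
Proof.
have sq_ge0 (w : I -> R) : 0 <= \sum_(i <- r) w i ^+ 2.
  by apply: sumr_ge0 => i _; exact: sqr_ge0.
rewrite -sqrtrM //; apply: le_sqrtrM_amgm => // l l0.
rewrite mulr_suml mulr_suml -big_split /= mulr_suml; apply: ler_sum => i _.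
by have := mulr2_le_amgm (u i) (v i) l0; lra.
Qed.

Lemma sum_mul_sqrt_le (I : Type) (r : seq I) (p A : I -> R) :
  (forall i, 0 <= p i) -> (forall i, 0 <= A i) ->
  \sum_(i <- r) p i * Num.sqrt (A i) <=
  Num.sqrt (\sum_(i <- r) p i) * Num.sqrt (\sum_(i <- r) p i * A i).
Proof.
move=> p0 A0.
have := cauchy_schwarz_sum r (fun i => Num.sqrt (p i)) (fun i => Num.sqrt (p i * A i)).
under eq_bigr => i _ do rewrite sqrtrM // mulrA -expr2 sqr_sqrtr //.
under [\sum_(i <- r) Num.sqrt (p i) ^+ 2]eq_bigr => i _ do rewrite sqr_sqrtr //.
by under [\sum_(i <- r) Num.sqrt (p i * A i) ^+ 2]eq_bigr => i _ do rewrite sqr_sqrtr ?mulr_ge0 //.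
Qed.

End AMGM.

Section Pinsker.
Context {R : realType}.
Implicit Types x : R.

Lemma is_derive_ge0_le (f df : R -> R) (a b : R) : a <= b ->
  (forall y, a <= y <= b -> is_derive y 1 f (df y)) ->
  (forall y, a < y < b -> 0 <= df y) -> f a <= f b.
Proof.
move=> ab fdf df0.
have aab : a \in `[a, b]%R by rewrite in_itv /= lexx ab.
have bab : b \in `[a, b]%R by rewrite in_itv /= lexx ab.
apply: (@ger0_derive1_le_cc R f a b) => //.
- by move=> y; rewrite in_itv /= => /andP[ay yb]; have [] := fdf y (ltac:(by rewrite !ltW)).
- move=> y; rewrite in_itv /= => /andP[ay yb].
  by rewrite derive1E (@derive_val _ _ _ _ _ _ _ (fdf y _)) ?df0 ?ay ?ltW.
- apply: derivable_within_continuous => y; rewrite in_itv /= => yab.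
  by have [] := fdf y yab.
Qed.

Lemma is_derive_sign_min1 (f df : R -> R) :
  (forall x, 0 < x -> is_derive x 1 f (df x)) ->
  (forall x, 0 < x -> 0 <= (x - 1) * df x) -> forall x, 0 < x -> f 1 <= f x.
Proof.
move=> fdf dfs x x0; case: (lerP 1 x) => x1.
  apply: is_derive_ge0_le x1 _ _ => [y /andP[y1 _]|y /andP[y1 _]].
    by apply: fdf; lra.
  by have := dfs y (ltac:(lra)); nra.
rewrite -lerN2; apply: (@is_derive_ge0_le (fun y => - f y) (fun y => - df y)).
- exact: ltW.
- by move=> y /andP[y1 _]; have := fdf y (ltac:(lra)); apply: is_deriveN.
- by move=> y /andP[y1 y2]; have := dfs y (ltac:(lra)); nra.
Qed.

Lemma ln_ge_1subV x : 0 < x -> 1 - x^-1 <= ln x.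
Proof.
move=> x0; have := @le_ln1Dx R (x^-1 - 1).
by rewrite ltrBrDr addNr invr_gt0 addrC subrK lnV ?posrE // => /(_ x0); lra.
Qed.

Lemma ln_mean_sign x : 0 < x -> 0 <= (x - 1) * ((x + 1) * ln x - 2 * (x - 1)).
Proof.
move=> x0; pose m (y : R) := (y + 1) * ln y - 2 * (y - 1).
have dm (y : R) : 0 < y -> is_derive y 1 m (ln y + y^-1 - 1).
  move=> y0; have := is_derive1_ln y0 => ?.
  by apply: is_derive_eq; rewrite /GRing.scale /=; field; lra.
have dm0 (y : R) : 0 < y -> 0 <= ln y + y^-1 - 1 by move=> /ln_ge_1subV; lra.
have m1 : m 1 = 0 by rewrite /m ln1; ring.
have incr (a b : R) : 0 < a -> a <= b -> m a <= m b.
  move=> a0 ab; apply: is_derive_ge0_le ab _ _ => y /andP[ay _].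
    by apply: dm; lra.
  by apply: dm0; lra.
rewrite -/(m x); case: (lerP 1 x) => x1.
  by have := incr _ _ ltr01 x1; rewrite m1; nra.
by have := incr _ _ x0 (ltW x1); rewrite m1; nra.
Qed.

(* The f-divergence generator of the Kullback-Leibler divergence:
   ln n - H(p) = n^-1 * sum_j fKL (n * p_j). *)
Definition fKL x := x * ln x - x + 1.

Lemma fKL_ge0 x : 0 <= x -> 0 <= fKL x.
Proof.
rewrite /fKL le_eqVlt => /orP[/eqP <-|x0]; first by rewrite mul0r; lra.
have := ln_ge_1subV x0; have : x * x^-1 = 1 by rewrite mulfV ?gt_eqF.
nra.
Qed.

Lemma pinsker_fKL x : 0 <= x -> 3 * (x - 1) ^+ 2 <= 2 * (x + 2) * fKL x.
Proof.
rewrite le_eqVlt => /orP[/eqP <-|x0]; first by rewrite /fKL ln0 //; lra.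
pose g (y : R) := 2 * (y + 2) * fKL y - 3 * (y - 1) ^+ 2.
suff : g 1 <= g x by rewrite /g /fKL ln1; lra.
apply: (@is_derive_sign_min1 g (fun y => 4 * ((y + 1) * ln y - 2 * (y - 1)))) => //.
  move=> y y0; have := is_derive1_ln y0 => ?.
  by apply: is_derive_eq; rewrite /GRing.scale /= /fKL; field; lra.
by move=> y /ln_mean_sign; nra.
Qed.

End Pinsker.

Section KL_uniform.
Context {R : realType}.

Lemma abs_subr1_le_fKL (x l : R) : 0 <= x -> 0 < l ->
  `|x - 1| <= fKL x / l + l * (x + 2) / 6.
Proof.
move=> x0 l0; have c0 : 0 < l * (x + 2) / 3 by rewrite divr_gt0 // mulr_gt0 //; lra.
have := mulr2_le_amgm `|x - 1| 1 c0; rewrite mulr1 expr1n mulr1 real_normK ?num_real //.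
have : (x - 1) ^+ 2 / (l * (x + 2) / 3) <= 2 * fKL x / l.
  have x2 : 0 < l * (x + 2) by rewrite mulr_gt0 //; lra.
  have -> : (x - 1) ^+ 2 / (l * (x + 2) / 3) = 3 * (x - 1) ^+ 2 / (l * (x + 2)).
    by field; lra.
  have -> : 2 * fKL x / l = 2 * (x + 2) * fKL x / (l * (x + 2)) by field; lra.
  by rewrite ler_pM2r ?invr_gt0 // pinsker_fKL.
lra.
Qed.

Lemma KL_unif_sum (n : nat) (p : 'I_n -> R) : (0 < n)%N -> is_dist p ->
  ln n%:R - entropy p = n%:R^-1 * \sum_j fKL (n%:R * p j).
Proof.
move=> n0 [p0 p1]; have N0 : 0 < n%:R :> R by rewrite ltr0n.
have term j : n%:R^-1 * fKL (n%:R * p j) = p j * ln n%:R + p j * ln (p j) - p j + n%:R^-1.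
  have [->|pj0] := eqVneq (p j) 0; first by rewrite mulr0 /fKL !mul0r; field; lra.
  have pjp : 0 < p j by rewrite lt_neqAle eq_sym pj0 p0.
  by rewrite /fKL lnM ?posrE //; field; lra.
rewrite mulr_sumr (eq_bigr _ (fun j _ => term j)) !big_split /= -mulr_suml p1.
rewrite sumr_const card_ord /entropy -[n%:R^-1 *+ n]mulr_natr mulVf ?gt_eqF // sumrN p1; ring.
Qed.

Lemma entropy_le_ln (n : nat) (p : 'I_n -> R) : (0 < n)%N -> is_dist p ->
  entropy p <= ln n%:R.
Proof.
move=> n0 pd; rewrite -subr_ge0 KL_unif_sum // mulr_ge0 ?invr_ge0 ?ler0n //.
by apply: sumr_ge0 => j _; rewrite fKL_ge0 // mulr_ge0 ?ler0n //; case: pd.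
Qed.

Lemma dist_le1 (n : nat) (p : 'I_n -> R) j : is_dist p -> p j <= 1.
Proof. by move=> [p0 <-]; rewrite (bigD1 j) //= lerDl sumr_ge0. Qed.

Lemma entropy_ge0 (n : nat) (p : 'I_n -> R) : is_dist p -> 0 <= entropy p.
Proof.
move=> pd; rewrite oppr_ge0; apply: sumr_le0 => j _.
by rewrite mulr_ge0_le0 ?ln_le0 ?(dist_le1 j pd) //; case: pd.
Qed.

(* Pinsker's inequality against the uniform distribution, before optimizing in l:
   the infimum over l of the right-hand side is sqrt (2 (ln n - H(p))). *)
Lemma pinsker_unif (n : nat) (p : 'I_n -> R) (l : R) : (0 < n)%N -> is_dist p -> 0 < l ->
  \sum_j `|p j - n%:R^-1| <= (ln n%:R - entropy p) / l + l / 2.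
Proof.
move=> n0 pd l0; have [p0 p1] := pd; have N0 : 0 < n%:R :> R by rewrite ltr0n.
have term j : `|p j - n%:R^-1| <= n%:R^-1 * (fKL (n%:R * p j) / l + l * (n%:R * p j + 2) / 6).
  have -> : p j - n%:R^-1 = n%:R^-1 * (n%:R * p j - 1) by field; lra.
  rewrite normrM gtr0_norm ?invr_gt0 // ler_wpM2l ?invr_ge0 ?ler0n //.
  by apply: abs_subr1_le_fKL; rewrite ?mulr_ge0 ?ler0n.
apply: le_trans (ler_sum _ (fun j _ => term j)) _.
have sum_lin : \sum_j l * (n%:R * p j + 2) / 6 = l * n%:R / 2.
  rewrite -mulr_suml -mulr_sumr big_split /= -mulr_sumr p1 sumr_const card_ord.
  by rewrite -[2 *+ n]mulr_natr; field.
rewrite KL_unif_sum // -mulr_sumr big_split /= -mulr_suml sum_lin.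
by rewrite le_eqVlt; apply/predU1P; left; field; lra.
Qed.

Lemma AD_ge0 (n : nat) (a : 'I_n -> 'I_n -> R) : (forall t, is_dist (a t)) -> 0 <= AD a.
Proof.
case: n a => [|n] a da; first by rewrite /AD big_ord0 mulr0.
rewrite /AD mulr_ge0 ?invr_ge0 ?mulr_ge0 ?ler0n ?ln_ge0 ?ler1n //.
by apply: sumr_ge0 => t _; rewrite subr_ge0 entropy_le_ln.
Qed.

Lemma AD_le1 (n : nat) (a : 'I_n -> 'I_n -> R) : (1 < n)%N ->
  (forall t, is_dist (a t)) -> AD a <= 1.
Proof.
move=> n1 da; have lnn : 0 < ln (n%:R : R) by rewrite ln_gt0 ?ltr1n.
rewrite /AD mulrC ler_pdivrMr ?mulr_gt0 ?ltr0n 1?ltnW // mul1r.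
apply: (@le_trans _ _ (\sum_(t < n) ln (n%:R : R))).
  by apply: ler_sum => t _; rewrite gerBl entropy_ge0.
by rewrite sumr_const card_ord mulr_natl.
Qed.

Lemma ADbar_ge0 (n : nat) (a a' : 'I_n -> 'I_n -> R) :
  (forall t, is_dist (a t)) -> (forall t, is_dist (a' t)) -> 0 <= ADbar a a'.
Proof. by move=> da da'; rewrite /ADbar divr_ge0 ?addr_ge0 ?AD_ge0. Qed.

Lemma ADbar_le1 (n : nat) (a a' : 'I_n -> 'I_n -> R) : (1 < n)%N ->
  (forall t, is_dist (a t)) -> (forall t, is_dist (a' t)) -> ADbar a a' <= 1.
Proof. by move=> n1 da da'; have := AD_le1 n1 da; have := AD_le1 n1 da'; rewrite /ADbar; lra. Qed.

Lemma mean_l1_dist_le (n : nat) (a a' : 'I_n -> 'I_n -> R) : (1 < n)%N ->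
  (forall t, is_dist (a t)) -> (forall t, is_dist (a' t)) ->
  n%:R^-1 * \sum_t \sum_j `|a t j - a' t j| <= Num.sqrt (8 * ln n%:R * ADbar a a').
Proof.
move=> n1 da da'; have n0 : (0 < n)%N by apply: ltnW.
have N0 : 0 < n%:R :> R by rewrite ltr0n.
have lnn : 0 < ln (n%:R : R) by rewrite ln_gt0 ?ltr1n.
pose K (b : 'I_n -> 'I_n -> R) := \sum_t (ln n%:R - entropy (b t)).
have ADbarE : ADbar a a' = (K a + K a') / (2 * n%:R * ln n%:R).
  by rewrite /ADbar /AD -/(K a) -/(K a'); field; rewrite !gt_eqF.
have -> : 8 * ln n%:R * ADbar a a' = 4 * ln n%:R * ADbar a a' * 2 by ring.
have ADbar0 := ADbar_ge0 da da'.
have lnn0 : 0 <= ln (n%:R : R) := ltW lnn.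
apply: le_sqrtrM_amgm; [exact: mulr_ge0 (mulr_ge0 _ lnn0) ADbar0 | lra | move=> l l0].
have dist_le t : \sum_j `|a t j - a' t j| <=
    (ln n%:R - entropy (a t) + (ln n%:R - entropy (a' t))) / l + l.
  apply: le_trans (_ : \sum_j (`|a t j - n%:R^-1| + `|a' t j - n%:R^-1|) <= _).
    apply: ler_sum => j _.
    have -> : a t j - a' t j = (a t j - n%:R^-1) - (a' t j - n%:R^-1) by ring.
    exact: ler_normB.
  rewrite big_split /=; have := pinsker_unif n0 (da t) l0.
  by have := pinsker_unif n0 (da' t) l0; rewrite mulrDl; lra.
rewrite ler_pdivrMl //; apply: le_trans (ler_sum _ (fun t _ => dist_le t)) _.
rewrite big_split /= -mulr_suml big_split /= sumr_const card_ord -/(K a) -/(K a').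
rewrite ADbarE -[l *+ n]mulr_natl.
by rewrite le_eqVlt; apply/predU1P; left; field; rewrite !gt_eqF.
Qed.

End KL_uniform.

Section Euclidean.
Context {R : realType}.

Lemma l2norm_ge0 k (v : 'rV[R]_k) : 0 <= l2norm v.
Proof. exact: sqrtr_ge0. Qed.

Lemma l2normZ k (c : R) (v : 'rV[R]_k) : l2norm (c *: v) = `|c| * l2norm v.
Proof.
rewrite /l2norm (eq_bigr (fun i => c ^+ 2 * v 0 i ^+ 2)) => [|i _]; last by rewrite mxE exprMn.
by rewrite -mulr_sumr sqrtrM ?sqr_ge0 // sqrtr_sqr.
Qed.

Lemma l2normD k (u v : 'rV[R]_k) : l2norm (u + v) <= l2norm u + l2norm v.
Proof.
have sq_ge0 (w : 'rV[R]_k) : 0 <= \sum_i w 0 i ^+ 2 by apply: sumr_ge0 => i _; exact: sqr_ge0.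
rewrite -(ger0_norm (addr_ge0 (l2norm_ge0 u) (l2norm_ge0 v))) -sqrtr_sqr ler_sqrt ?sqr_ge0 //.
have -> : \sum_i (u + v) 0 i ^+ 2 =
    \sum_i u 0 i ^+ 2 + 2 * \sum_i u 0 i * v 0 i + \sum_i v 0 i ^+ 2.
  rewrite mulr_sumr -!big_split /=; apply: eq_bigr => i _; rewrite mxE; ring.
rewrite sqrrD /l2norm !sqr_sqrtr // lerD2r lerD2l -[X in _ <= X]mulr_natl ler_wpM2l //.
exact: cauchy_schwarz_sum.
Qed.

Lemma l2norm_sum k (I : Type) (r : seq I) (c : I -> R) (w : I -> 'rV[R]_k) :
  l2norm (\sum_(i <- r) c i *: w i) <= \sum_(i <- r) `|c i| * l2norm (w i).
Proof.
apply: (big_ind2 (fun x y => l2norm x <= y)) => [|x1 x2 y1 y2 h1 h2|i _].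
- by rewrite -(scale0r 0) l2normZ normr0 mul0r.
- exact: le_trans (l2normD _ _) (lerD h1 h2).
- by rewrite l2normZ.
Qed.

Lemma inf2norm_ge0 n d (V : 'M[R]_(n, d)) : 0 <= inf2norm V.
Proof. exact: bigmax_ge_id. Qed.

Lemma l2norm_row_le_inf2norm n d (V : 'M[R]_(n, d)) j : l2norm (row j V) <= inf2norm V.
Proof. exact: le_bigmax. Qed.

Lemma l2norm_Delta_ht_le n d (a a' : 'I_n -> 'I_n -> R) (V : 'M[R]_(n, d)) t :
  l2norm (Delta_ht a a' V t) <= inf2norm V * \sum_j `|a t j - a' t j|.
Proof.
rewrite /Delta_ht mulmx_sum_row mulr_sumr; apply: le_trans (l2norm_sum _ _ _) _.
apply: ler_sum => j _; rewrite mxE mulrC ler_wpM2r //.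
exact: l2norm_row_le_inf2norm.
Qed.

End Euclidean.

Section Heads.
Context {R : realType}.

Lemma mean_l2norm_Delta_ht_le n d (a a' : 'I_n -> 'I_n -> R) (V : 'M[R]_(n, d)) (M : R) :
  (1 < n)%N -> (forall t, is_dist (a t)) -> (forall t, is_dist (a' t)) ->
  inf2norm V <= M ->
  n%:R^-1 * \sum_t l2norm (Delta_ht a a' V t) <= M * Num.sqrt (8 * ln n%:R * ADbar a a').
Proof.
move=> n1 da da' VM; have M0 := le_trans (inf2norm_ge0 V) VM.
apply: le_trans (ler_wpM2l M0 (mean_l1_dist_le n1 da da')).
rewrite mulrCA ler_wpM2l ?invr_ge0 ?ler0n // mulr_sumr ler_sum // => t _.
exact: le_trans (l2norm_Delta_ht_le _ _ _ _) (ler_wpM2r (sumr_ge0 _ _) VM).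
Qed.

Lemma pruned_ge0 H (m : 'I_H -> bool) h : 0 <= pruned m h :> R.
Proof. by rewrite /pruned; case: (m h); rewrite ?subrr ?subr0. Qed.

Lemma DeltaNorm_ge0 (H n d : nat) (m : 'I_H -> bool)
    (alpha alpha' : 'I_H -> 'I_n -> 'I_n -> R) (V : 'I_H -> 'M[R]_(n, d)) :
  0 <= DeltaNorm m alpha alpha' V.
Proof.
rewrite /DeltaNorm mulr_ge0 ?invr_ge0 ?ler0n // sumr_ge0 // => t _.
by rewrite sumr_ge0 // => h _; rewrite mulr_ge0 ?pruned_ge0 ?l2norm_ge0.
Qed.

Lemma DeltaNorm_le (H n d : nat) (m : 'I_H -> bool) (M : R)
    (alpha alpha' : 'I_H -> 'I_n -> 'I_n -> R) (V : 'I_H -> 'M[R]_(n, d)) :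
  (1 < n)%N -> (forall h t, is_dist (alpha h t)) -> (forall h t, is_dist (alpha' h t)) ->
  (forall h, inf2norm (V h) <= M) ->
  DeltaNorm m alpha alpha' V <=
  M * Num.sqrt (8 * ln n%:R) * \sum_h pruned m h * Num.sqrt (ADbar (alpha h) (alpha' h)).
Proof.
move=> n1 da da' VM; rewrite /DeltaNorm exchange_big /= !mulr_sumr.
apply: ler_sum => h _; rewrite -mulr_sumr mulrCA [X in _ <= X]mulrCA ler_wpM2l ?pruned_ge0 //.
rewrite -mulrA -sqrtrM ?mulr_ge0 ?ler0n ?ln_ge0 ?ler1n 1?ltnW //.
exact: mean_l2norm_Delta_ht_le.
Qed.

Lemma pruned_cauchy_schwarz (H n d : nat) (m : 'I_H -> bool) (M : R)
    (alpha alpha' : 'I_H -> 'I_n -> 'I_n -> R) (V : 'I_H -> 'M[R]_(n, d)) :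
  (1 < n)%N -> (forall h t, is_dist (alpha h t)) -> (forall h t, is_dist (alpha' h t)) ->
  (forall h, inf2norm (V h) <= M) ->
  M * Num.sqrt (8 * ln n%:R) * \sum_h pruned m h * Num.sqrt (ADbar (alpha h) (alpha' h)) <=
  Num.sqrt 8 * M * Num.sqrt ((\sum_h pruned m h) * ln n%:R) *
  Num.sqrt (\sum_h pruned m h * ADbar (alpha h) (alpha' h)).
Proof.
case: H m alpha alpha' V => [|H] m alpha alpha' V n1 da da' VM.
  by rewrite !big_ord0 mul0r sqrtr0 !mulr0.
have M0 := le_trans (inf2norm_ge0 _) (VM ord0).
have lnn0 : 0 <= ln (n%:R : R) by rewrite ln_ge0 // ler1n ltnW.
rewrite !sqrtrM ?sumr_ge0 // => [|h _]; last exact: pruned_ge0.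
rewrite (_ : _ * _ * _ * _ = M * Num.sqrt 8 * Num.sqrt (ln n%:R) *
  (Num.sqrt (\sum_h pruned m h) * Num.sqrt (\sum_h pruned m h * ADbar (alpha h) (alpha' h)))).
  rewrite -!mulrA !ler_wpM2l ?sqrtr_ge0 //.
  by apply: sum_mul_sqrt_le => h; [exact: pruned_ge0 | exact: ADbar_ge0].
by ring.
Qed.

End Heads.

Section Integrals.
Context {R : realType} (d : measure_display) (T : measurableType d).

Lemma Rintegral_sum (mu : {measure set T -> \bar R}) (D : set T) (I : Type) (r : seq I)
    (f : I -> T -> R) :
  measurable D -> (forall i, mu.-integrable D (EFin \o f i)) ->
  Rintegral mu D (fun x => \sum_(i <- r) f i x) = \sum_(i <- r) Rintegral mu D (f i).
Proof.
move=> mD fi; elim: r => [|i r IH].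
  by under eq_fun do rewrite big_nil; rewrite Rintegral_cst // mul0r big_nil.
under eq_fun do rewrite big_cons; rewrite big_cons RintegralD // ?IH //.
have -> : EFin \o (fun x => \sum_(j <- r) f j x) = fun x => \sum_(j <- r) (f j x)%:E.
  by apply/funext => x; rewrite /= sumEFin.
by apply: integrable_sum => // j _; exact: fi.
Qed.

Variable P : probability T R.

Lemma probability_nonempty : [set: T] !=set0.
Proof.
apply/set0P/negP => /eqP T0; have := probability_setT P.
by rewrite T0 measure0 => /eqP; rewrite eqe eq_sym oner_eq0.
Qed.

Lemma integrableZl_EFin (c : R) (f : T -> R) : P.-integrable setT (EFin \o f) ->
  P.-integrable setT (EFin \o (fun x => c * f x)).
Proof. by move=> /(integrableZl measurableT c); apply: eq_integrable => // x _. Qed.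

Lemma integrable_sqrt (f : T -> R) : (forall x, 0 <= f x) ->
  P.-integrable setT (EFin \o f) -> P.-integrable setT (EFin \o (fun x => Num.sqrt (f x))).
Proof.
move=> f0 fi; have mf : measurable_fun setT f by case/integrableP: fi => /measurable_EFinP.
have f1_int : P.-integrable setT (EFin \o (fun x => f x + 1)).
  exact: integrableD _ fi (finite_measure_integrable_cst P 1 measurableT).
apply: le_integrable f1_int => //.
  apply/measurable_EFinP.
  exact: measurableT_comp (continuous_measurable_fun (@sqrt_continuous R)) mf.
move=> x _; rewrite /= lee_fin !ger0_norm ?sqrtr_ge0 ?addr_ge0 //.
have := mulr2_le_amgm (Num.sqrt (f x)) 1 ltr01.
by rewrite sqr_sqrtr // !mulr1 expr1n divr1; have := sqrtr_ge0 (f x); lra.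
Qed.

Lemma Rintegral_sqrt_le (f : T -> R) : (forall x, 0 <= f x) ->
  P.-integrable setT (EFin \o f) ->
  Rintegral P setT (fun x => Num.sqrt (f x)) <= Num.sqrt (Rintegral P setT f).
Proof.
move=> f0 fi; have P1 : fine (P setT) = 1 by rewrite probability_setT.
rewrite -[Rintegral P setT f]mulr1; apply: le_sqrtrM_amgm => // [|l l0].
  exact: Rintegral_ge0.
apply: le_trans (_ : _ <= Rintegral P setT (fun x => (2 * l)^-1 * f x + l / 2)) _.
  apply: le_Rintegral => //; first exact: integrable_sqrt.
    exact: integrableD _ (integrableZl_EFin _ fi) (finite_measure_integrable_cst P _ measurableT).
  move=> x _.
  have := mulr2_le_amgm (Num.sqrt (f x)) 1 l0; rewrite sqr_sqrtr // !mulr1 expr1n.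
  have -> : (2 * l)^-1 * f x + l / 2 = (f x / l + l) / 2 by field; lra.
  lra.
rewrite RintegralD ?integrableZl_EFin //; last exact: finite_measure_integrable_cst.
rewrite RintegralZl // Rintegral_cst // P1.
by rewrite le_eqVlt; apply/predU1P; left; field; lra.
Qed.

Lemma expected_DeltaNorm_le (H n dv : nat) (m : 'I_H -> bool) (M : R)
    (alpha alpha' : T -> 'I_H -> 'I_n -> 'I_n -> R) (V : T -> 'I_H -> 'M[R]_(n, dv)) :
  (1 < n)%N ->
  (forall x h t, is_dist (alpha x h t)) -> (forall x h t, is_dist (alpha' x h t)) ->
  (forall x h, inf2norm (V x h) <= M) ->
  measurable_fun setT (fun x => DeltaNorm m (alpha x) (alpha' x) (V x)) ->
  (forall h, measurable_fun setT (fun x => ADbar (alpha x h) (alpha' x h))) ->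
  Rintegral P setT (fun x => DeltaNorm m (alpha x) (alpha' x) (V x)) <=
  Num.sqrt 8 * M * Num.sqrt ((\sum_h pruned m h) * ln n%:R) *
  Num.sqrt (\sum_h pruned m h * Rintegral P setT (fun x => ADbar (alpha x h) (alpha' x h))).
Proof.
move=> n1 da da' VM mDN mA.
pose K := Num.sqrt 8 * M * Num.sqrt ((\sum_h pruned m h) * ln n%:R).
pose S x := \sum_h pruned m h * ADbar (alpha x h) (alpha' x h).
have K0 : 0 <= K.
  have [H0|Hpos] := posnP H; first by subst H; rewrite /K big_ord0 mul0r sqrtr0 mulr0.
  have [x _] := probability_nonempty.
  have M0 := le_trans (inf2norm_ge0 _) (VM x (Ordinal Hpos)).
  by rewrite /K !mulr_ge0 ?sqrtr_ge0.
have A_int h : P.-integrable setT (EFin \o (fun x => ADbar (alpha x h) (alpha' x h))).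
  apply: le_integrable (finite_measure_integrable_cst P 1 measurableT) => //.
    exact/measurable_EFinP.
  move=> x _; rewrite /= lee_fin normr1 ger0_norm ?ADbar_ge0 //.
  exact: ADbar_le1.
have S0 x : 0 <= S x by rewrite sumr_ge0 // => h _; rewrite mulr_ge0 ?pruned_ge0 ?ADbar_ge0.
have S_int : P.-integrable setT (EFin \o S).
  have -> : EFin \o S = fun x => \sum_h ((pruned m h * ADbar (alpha x h) (alpha' x h))%:E).
    by apply/funext => x; rewrite /= sumEFin.
  by apply: integrable_sum => // h _; exact: integrableZl_EFin.
have KS_int := integrableZl_EFin K (integrable_sqrt S0 S_int).
have DN_le x : DeltaNorm m (alpha x) (alpha' x) (V x) <= K * Num.sqrt (S x).
  apply: le_trans (DeltaNorm_le _ n1 (da x) (da' x) (VM x)) _.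
  exact: pruned_cauchy_schwarz _ n1 (da x) (da' x) (VM x).
apply: le_trans (_ : _ <= Rintegral P setT (fun x => K * Num.sqrt (S x))) _.
  apply: le_Rintegral => //; apply: le_integrable KS_int => //; first exact/measurable_EFinP.
  move=> x _; rewrite /= lee_fin ger0_norm ?DeltaNorm_ge0 //.
  by rewrite ger0_norm ?DN_le // mulr_ge0 ?sqrtr_ge0.
rewrite RintegralZl ?integrable_sqrt // ler_wpM2l //.
apply: le_trans (Rintegral_sqrt_le S0 S_int) _.
rewrite /S Rintegral_sum // => [|h]; last exact: integrableZl_EFin.
by under eq_bigr => h _ do rewrite RintegralZl //.
Qed.

End Integrals.

Theorem mainTheorem6 (R : realType) :
  (* pointwise bound, for a fixed input x *)
  (forall (H n d : nat) (m : 'I_H -> bool) (rho M : R)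
     (alpha alpha' : 'I_H -> 'I_n -> 'I_n -> R) (V : 'I_H -> 'M[R]_(n, d)),
     (2 <= n)%N ->
     \sum_(h < H) pruned m h = H%:R * rho ->
     (forall h t, is_dist (alpha h t)) ->
     (forall h t, is_dist (alpha' h t)) ->
     (forall h, inf2norm (V h) <= M) ->
     DeltaNorm m alpha alpha' V
       <= M * Num.sqrt (8 * ln n%:R) *
          \sum_(h < H) pruned m h * Num.sqrt (ADbar (alpha h) (alpha' h))
     /\
     M * Num.sqrt (8 * ln n%:R) *
          \sum_(h < H) pruned m h * Num.sqrt (ADbar (alpha h) (alpha' h))
       <= Num.sqrt 8 * M * Num.sqrt (H%:R * rho * ln n%:R) *
          Num.sqrt (\sum_(h < H) pruned m h * ADbar (alpha h) (alpha' h)))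
  /\
  (* bound in expectation, all inputs of the same length n *)
  (forall (dsp : measure_display) (T : measurableType dsp) (P : probability T R)
     (H n d : nat) (m : 'I_H -> bool) (rho M : R)
     (alpha alpha' : T -> 'I_H -> 'I_n -> 'I_n -> R) (V : T -> 'I_H -> 'M[R]_(n, d)),
     (2 <= n)%N ->
     \sum_(h < H) pruned m h = H%:R * rho ->
     (forall x h t, is_dist (alpha x h t)) ->
     (forall x h t, is_dist (alpha' x h t)) ->
     (forall x h, inf2norm (V x h) <= M) ->
     measurable_fun setT (fun x => DeltaNorm m (alpha x) (alpha' x) (V x)) ->
     (forall h, measurable_fun setT (fun x => ADbar (alpha x h) (alpha' x h))) ->
     Rintegral P setT (fun x => DeltaNorm m (alpha x) (alpha' x) (V x))
       <= Num.sqrt 8 * M * Num.sqrt (H%:R * rho * ln n%:R) *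
          Num.sqrt (\sum_(h < H) pruned m h *
                      Rintegral P setT (fun x => ADbar (alpha x h) (alpha' x h)))).
Proof.
split=> [H n d m rho M alpha alpha' V n2 hs da da' VM
        |dsp T P H n d m rho M alpha alpha' V n2 hs da da' VM mDN mA]; rewrite -hs.
  by split; [exact: DeltaNorm_le | exact: pruned_cauchy_schwarz].
exact: expected_DeltaNorm_le.
Qed.
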